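(* Let $n$ be a positive integer and let $(D;H)$ be a based diagram of $(K_n;H)$ with $H=v_1v_2\cdots v_nv_1$. If $M(D;H)=M_n$, then $\varepsilon(D;H)=Z(n)$.
   Context: $K_n$ is the complete graph with vertices $v_1,\dots,v_n$. A based diagram $(D;H)$ of $(K_n;H)$ is a diagram of $K_n$ on $S^2$ in which $H$ is drawn on the equator and every other edge diagram lies (apart from its endpoints) in the Northern or Southern Hemisphere; $e_{(i,j)}$ denotes the edge diagram joining $v_i,v_j$. Let $A$ be the boundary of a small regular neighbourhood of $H$. For edge diagrams $e,f$ not in $H$, $\varepsilon_H(e,f)=1$ if $e,f$ lie in the same hemisphere and their endpoints on $A$ alternate along $A$, and $0$ otherwise; $\varepsilon(D;H)$ is the sum of $\varepsilon_H(e,f)$ over all unordered pairs of distinct edge diagrams not in $H$. The matrix $M(D;H)=(a_{(i,j)})$ has $a_{(i,j)}=0$ if $j\le i+1$ or $(i,j)=(1,n)$, and otherwise $a_{(i,j)}=1$ (resp. $-1$) if $e_{(i,j)}$ is in the Northern (resp. Southern) Hemisphere. $Z(n)=\frac14\lfloor \frac n2\rfloor\lfloor\frac{n-1}2\rfloor\lfloor\frac{n-2}2\rfloor\lfloor\frac{n-3}2\rfloor$. The $n\times n$ matrix $M_n=(a_{(i,j)})$ is defined as follows. If $n$ is even: $a_{(i,j)}=0$ if $j\le i+1$ or $(i,j)=(1,n)$; otherwise $a_{(i,j)}=1$ if ($j\ge i+2$ and $\frac{n+2}{2}-i\le j\le n-i$) or ($j\ge i+2$ and $j\ge \frac{3n+2}{2}-i$);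 and $a_{(i,j)}=-1$ in all other cases. If $n$ is odd: $a_{(i,j)}=0$ if $j\le i+1$ or $(i,j)=(1,n)$; otherwise $a_{(i,j)}=1$ if ($j\ge i+2$ and $\frac{n+3}{2}-i\le j\le n-i$) or ($j\ge i+2$ and $j\ge\frac{3n+1}{2}-i$); and $a_{(i,j)}=-1$ in all other cases. *)

From mathcomp Require Import all_boot all_order all_algebra.
Set Implicit Arguments. Unset Strict Implicit. Unset Printing Implicit Defensive.

Inductive hemisphere := North | South.

Definition hemisphere_eqb (a b : hemisphere) : bool :=
  match a, b with North, North | South, South => true | _, _ => false end.

(* (i,j), 1 <= i < j <= n, is an edge of K_n NOT in H = v_1 v_2 ... v_n v_1 *)
Definition offH (n i j : nat) : bool :=
  [&& 1 <= i, i.+2 <= j, j <= n & ~~ ((i == 1) && (j == n))].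

(* A based diagram (D;H) of (K_n;H), H = v_1...v_nv_1, is recorded by the
   hemisphere  hemi i j  containing the edge diagram e_(i,j) (for offH n i j). *)

Definition alternate (i j k l : nat) : bool :=
  [|| (i < k < j) && (j < l) | (k < i < l) && (l < j)].

Definition epsH (hemi : nat -> nat -> hemisphere) (i j k l : nat) : nat :=
  (hemisphere_eqb (hemi i j) (hemi k l) && alternate i j k l : nat).

(* epsilon(D;H): sum over unordered pairs {e_(i,j), e_(k,l)} of distinct edge
   diagrams not in H (each unordered pair counted once via (i,j) <lex (k,l)) *)
Definition eps (n : nat) (hemi : nat -> nat -> hemisphere) : nat :=
  \sum_(1 <= i < n.+1) \sum_(1 <= j < n.+1) \sum_(1 <= k < n.+1) \sum_(1 <= l < n.+1)
    if [&& offH n i j, offH n k l & (i < k) || ((i == k) && (j < l))]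
    then epsH hemi i j k l else 0.

Definition MDH (n : nat) (hemi : nat -> nat -> hemisphere) (i j : nat) : int :=
  if (j <= i.+1) || ((i == 1) && (j == n)) then 0%R
  else match hemi i j with North => 1%R | South => (-1)%R end.

Definition Mn (n i j : nat) : int :=
  if (j <= i.+1) || ((i == 1) && (j == n)) then 0%R
  else if ~~ odd n then
    (if ((i + 2 <= j) && ((n + 2) %/ 2 - i <= j) && (j <= n - i))
        || ((i + 2 <= j) && ((3 * n + 2) %/ 2 - i <= j))
     then 1%R else (-1)%R)
  else
    (if ((i + 2 <= j) && ((n + 3) %/ 2 - i <= j) && (j <= n - i))
        || ((i + 2 <= j) && ((3 * n + 1) %/ 2 - i <= j))
     then 1%R else (-1)%R).

Definition fourZ (n : nat) : nat := (n %/ 2) * ((n - 1) %/ 2) * ((n - 2) %/ 2) * ((n - 3) %/ 2).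

(* Under M(D;H) = M_n the hemisphere of e_(i,j) depends only on i + j, so
   eps(D;H) counts the crossing pairs i < k < j < l of chords whose sums
   i + j and k + l get the same colour; counting crossing quadruples in cyclic
   order instead gives 4 eps(D;H).  For even n the colour of the sum s is
   chi((s + K) mod n), chi(r) = [r = 0 or r > n/2], with twist K = 2.  For odd
   n this fails only on the chords of sum n/2 + 1, and the reflection fixing
   such a chord shows that these contribute equally to both counts.
   The count C(K) for twist K does not depend on K: rotating the vertices adds
   2 to K, K + n acts as K, and for even n a reflection exchanges K = 2 with
   K = n - 1.  Hence C(2) is the average of C(K) over K.  Two chords of sums s
   and s' get equal colours for exactly |n - 2 ((s' - s) mod n)| twists, so by
   rotational symmetry the average becomes a sum over 0 < b < c < d < n, which
   collapses to sum_k (k - 1)(n - 1 - k)|n - 2k| = 4 Z(n). *)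

From mathcomp Require Import all_boot all_order all_algebra.
From mathcomp Require Import zify ring.

(** * Quadruple sums and crossing counts *)

Definition bij_on_range n (f g : nat -> nat) :=
  forall i, i < n -> [/\ f i < n, g i < n, g (f i) = i & f (g i) = i].

Lemma sum_nat_bij {n f g} (F : nat -> nat) : bij_on_range n f g ->
  \sum_(0 <= i < n) F (f i) = \sum_(0 <= i < n) F i.
Proof.
move=> fg; rewrite -(big_map f xpredT F); apply/perm_big/uniq_perm.
- rewrite map_inj_in_uniq ?iota_uniq // => x y; rewrite !mem_iota /= !subn0 => hx hy e.
  by have [_ _ <- _] := fg x hx; have [_ _ <- _] := fg y hy; rewrite e.
- exact: iota_uniq.
move=> x; rewrite mem_iota /= subn0; apply/mapP/idP => [[y]|xn].
  by rewrite mem_iota /= subn0 => /fg[fy _ _ _] ->.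
by have [_ gx _ <-] := fg x xn; exists (g x); rewrite // mem_iota /= subn0.
Qed.

Definition sum4 n (F : nat -> nat -> nat -> nat -> nat) :=
  \sum_(0 <= a < n) \sum_(0 <= b < n) \sum_(0 <= c < n) \sum_(0 <= d < n) F a b c d.

Lemma eq_sum4 n (F G : nat -> nat -> nat -> nat -> nat) :
  (forall a b c d, a < n -> b < n -> c < n -> d < n -> F a b c d = G a b c d) ->
  sum4 n F = sum4 n G.
Proof.
move=> FG; apply: eq_big_nat => a /andP[_ ha]; apply: eq_big_nat => b /andP[_ hb].
by apply: eq_big_nat => c /andP[_ hc]; apply: eq_big_nat => d /andP[_ hd]; apply: FG.
Qed.

Lemma sum4D n (F G : nat -> nat -> nat -> nat -> nat) :
  sum4 n (fun a b c d => F a b c d + G a b c d) = sum4 n F + sum4 n G.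
Proof.
rewrite /sum4 -big_split; apply: eq_big_nat => a _; rewrite -big_split.
apply: eq_big_nat => b _; rewrite -big_split.
by apply: eq_big_nat => c _; rewrite -big_split.
Qed.

Lemma sum_sum4 N n (F : nat -> nat -> nat -> nat -> nat -> nat) :
  \sum_(0 <= t < N) sum4 n (F t) = sum4 n (fun a b c d => \sum_(0 <= t < N) F t a b c d).
Proof.
rewrite exchange_big_nat; apply: eq_big_nat => a _.
rewrite exchange_big_nat; apply: eq_big_nat => b _.
by rewrite exchange_big_nat; apply: eq_big_nat => c _; rewrite exchange_big_nat.
Qed.

Lemma sum4_bij {n f g} (F : nat -> nat -> nat -> nat -> nat) : bij_on_range n f g ->
  sum4 n (fun a b c d => F (f a) (f b) (f c) (f d)) = sum4 n F.
Proof.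
move=> fg; rewrite /sum4 -[in RHS](sum_nat_bij _ fg); apply: eq_big_nat => a _.
rewrite -[in RHS](sum_nat_bij _ fg); apply: eq_big_nat => b _.
rewrite -[in RHS](sum_nat_bij _ fg); apply: eq_big_nat => c _.
by rewrite -[in RHS](sum_nat_bij _ fg).
Qed.

Lemma sum4_rot n (F : nat -> nat -> nat -> nat -> nat) :
  sum4 n (fun a b c d => F b c d a) = sum4 n F.
Proof.
rewrite /sum4 exchange_big_nat; apply: eq_big_nat => a _.
rewrite exchange_big_nat; apply: eq_big_nat => b _.
by rewrite exchange_big_nat.
Qed.

Lemma sum4_swap_bd n (F : nat -> nat -> nat -> nat -> nat) :
  sum4 n (fun a b c d => F a d c b) = sum4 n F.
Proof.
apply: eq_big_nat => a _; under eq_big_nat => b _ do rewrite exchange_big_nat.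
by rewrite exchange_big_nat; apply: eq_big_nat => d _; rewrite exchange_big_nat.
Qed.

Definition cyclic4 (a b c d : nat) : bool :=
  [|| [&& a < b < c & c < d], [&& b < c < d & d < a],
      [&& c < d < a & a < b] | [&& d < a < b & b < c]].

Lemma cyclic4_rot a b c d : cyclic4 b c d a = cyclic4 a b c d.
Proof. by rewrite /cyclic4; apply/idP/idP; lia. Qed.

Definition crossings n (k : nat -> nat -> bool) :=
  sum4 n (fun a b c d => [&& a < b < c, c < d & k a c == k b d] : nat).

Definition cyc_crossings n (k : nat -> nat -> bool) :=
  sum4 n (fun a b c d => cyclic4 a b c d && (k a c == k b d) : nat).

Lemma eq_cyc_crossings n (k k' : nat -> nat -> bool) :
  (forall x y, x < n -> y < n -> k x y = k' x y) -> cyc_crossings n k = cyc_crossings n k'.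
Proof. by move=> kk'; apply: eq_sum4 => a b c d *; rewrite !kk'. Qed.

Lemma cyc_crossingsE n k : (forall x y, k x y = k y x) ->
  cyc_crossings n k = 4 * crossings n k.
Proof.
move=> ksym; pose o a b c d : nat := [&& a < b < c, c < d & k a c == k b d].
have r1 : sum4 n (fun a b c d => o b c d a) = sum4 n o by apply: sum4_rot.
have r2 : sum4 n (fun a b c d => o c d a b) = sum4 n o.
  by rewrite -r1; apply: (sum4_rot _ (fun a b c d => o b c d a)).
have r3 : sum4 n (fun a b c d => o d a b c) = sum4 n o.
  by rewrite -r2; apply: (sum4_rot _ (fun a b c d => o c d a b)).
rewrite /cyc_crossings (@eq_sum4 _ _ (fun a b c d =>
  o a b c d + o b c d a + o c d a b + o d a b c)); last first.
  move=> a b c d _ _ _ _; rewrite /o [k c a]ksym [k d b]ksym [k b d == _]eq_sym.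
  by rewrite /cyclic4; case: (k a c == k b d); rewrite ?andbT ?andbF; lia.
by rewrite !sum4D r1 r2 r3 /crossings -/o; lia.
Qed.

(** * From the diagram to a crossing count *)

Definition Mn_north n s :=
  if odd n then ((n + 3) %/ 2 <= s <= n) || ((3 * n + 1) %/ 2 <= s)
  else ((n + 2) %/ 2 <= s <= n) || ((3 * n + 2) %/ 2 <= s).

Definition MDH_eq_Mn n hemi :=
  forall i j, 1 <= i <= n -> 1 <= j <= n -> MDH n hemi i j = Mn n i j.

Lemma hemi_Mn n hemi i j : MDH_eq_Mn n hemi -> offH n i j ->
  hemi i j = if Mn_north n (i + j) then North else South.
Proof.
rewrite /offH => MDH_Mn offHij.
have [ib jb] : 1 <= i <= n /\ 1 <= j <= n by lia.
move: (MDH_Mn i j ib jb); rewrite /MDH /Mn (_ : _ || _ = false); last lia.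
rewrite /Mn_north; case: (odd n) => /=.
all: set C := (X in _ = if X then _ else _); set C' := (X in if X then North else South).
all: have -> : C = C' by rewrite /C /C'; lia.
all: by case: (hemi i j); case: C'.
Qed.

Lemma eps_summandE n hemi i j k l : MDH_eq_Mn n hemi ->
  1 <= i <= n -> 1 <= j <= n -> 1 <= k <= n -> 1 <= l <= n ->
  (if [&& offH n i j, offH n k l & (i < k) || ((i == k) && (j < l))]
   then epsH hemi i j k l else 0) =
  [&& i < k < j, j < l & Mn_north n (i + j) == Mn_north n (k + l)].
Proof.
move=> MDH_Mn ib jb kb lb; have [ikjl|not_ikjl] := boolP [&& i < k < j & j < l].
  have offij : offH n i j by rewrite /offH; lia.
  have offkl : offH n k l by rewrite /offH; lia.
  rewrite offij offkl ifT /epsH; last lia.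
  rewrite (hemi_Mn _ _ _ _ MDH_Mn offij) (hemi_Mn _ _ _ _ MDH_Mn offkl).
  have -> : alternate i j k l by rewrite /alternate; lia.
  move: ikjl => /andP[-> ->]; rewrite andbT.
  by case: (Mn_north n (i + j)); case: (Mn_north n (k + l)).
rewrite [in RHS]andbA (negbTE not_ikjl); case: ifP => // order.
by rewrite /epsH (_ : alternate i j k l = false) ?andbF //; move: order; rewrite /alternate; lia.
Qed.

(* Vertex v_(x+1) becomes x, so the sum i + j of e_(i,j) becomes x + y + 2. *)
Lemma eps_crossings n hemi : MDH_eq_Mn n hemi ->
  eps n hemi = crossings n (fun x y => Mn_north n (x + y + 2)).
Proof.
move=> MDH_Mn; rewrite /eps (@eq_big_nat _ _ _ _ _ _ (fun i =>
  \sum_(1 <= j < n.+1) \sum_(1 <= k < n.+1) \sum_(1 <= l < n.+1)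
    [&& i < k < j, j < l & Mn_north n (i + j) == Mn_north n (k + l)])); last first.
  move=> i ib; apply: eq_big_nat => j jb; apply: eq_big_nat => k kb.
  by apply: eq_big_nat => l lb; apply: eps_summandE => //; lia.
rewrite /crossings /sum4 big_add1 /=; apply: eq_big_nat => a _; rewrite exchange_big_nat big_add1.
apply: eq_big_nat => b _ /=; rewrite big_add1; apply: eq_big_nat => c _ /=; rewrite big_add1.
have addSS x y : x.+1 + y.+1 = x + y + 2 by lia.
by apply: eq_big_nat => d _ /=; rewrite !ltnS !addSS.
Qed.

(** * Rotations and reflections of Z/nZ *)

Definition succ_mod n x := if x.+1 < n then x.+1 else 0.
Definition pred_mod n x := if x == 0 then n.-1 else x.-1.

Lemma bij_succ_mod n : bij_on_range n (succ_mod n) (pred_mod n).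
Proof. by move=> x xn; rewrite /succ_mod /pred_mod; split; do ?case: ifP; lia. Qed.

Lemma succ_modE n x : x < n -> succ_mod n x = x.+1 %% n.
Proof.
rewrite /succ_mod; case: ifP => [xn _|]; first by rewrite modn_small.
by move=> /negbT xn ?; rewrite (_ : x.+1 = n) ?modnn //; lia.
Qed.

Lemma cyclic4_succ_mod n a b c d : a < n -> b < n -> c < n -> d < n ->
  cyclic4 (succ_mod n a) (succ_mod n b) (succ_mod n c) (succ_mod n d) = cyclic4 a b c d.
Proof. by move=> *; rewrite /cyclic4 /succ_mod; do ?case: ifP; move=> *; apply/idP/idP; lia. Qed.

Definition refl_mod n k v := if v <= k then k - v else k + n - v.

Lemma bij_refl_mod n k : k < n -> bij_on_range n (refl_mod n k) (refl_mod n k).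
Proof. by move=> kn v vn; rewrite /refl_mod; split; do ?case: ifP; lia. Qed.

Lemma iter_succ_mod_lt n k x : x < n -> iter k (succ_mod n) x < n.
Proof. by move=> xn; elim: k => //= k IHk; have [] := bij_succ_mod _ _ IHk. Qed.

Lemma cyclic4_iter_succ_mod n k a b c d : a < n -> b < n -> c < n -> d < n ->
  let r := iter k (succ_mod n) in cyclic4 (r a) (r b) (r c) (r d) = cyclic4 a b c d.
Proof.
move=> an bn cn dn /=; elim: k => //= k <-.
by rewrite cyclic4_succ_mod ?iter_succ_mod_lt.
Qed.

Lemma refl_mod_iter n k v : k < n -> v < n ->
  refl_mod n k v = iter k (succ_mod n) (refl_mod n 0 v).
Proof.
move=> + vn; elim: k => //= k IHk kn; rewrite -IHk; last lia.
by rewrite /refl_mod /succ_mod; do ?case: ifP; lia.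
Qed.

Lemma cyclic4_refl_mod0 n a b c d : a < n -> b < n -> c < n -> d < n ->
  let r := refl_mod n 0 in cyclic4 (r a) (r b) (r c) (r d) = cyclic4 a d c b.
Proof.
move=> an bn cn dn /=; rewrite /cyclic4 /refl_mod !leqn0.
by do ?case: eqP; move=> *; subst; rewrite ?subn0; apply/idP/idP; lia.
Qed.

Lemma cyclic4_refl_mod n k a b c d : k < n -> a < n -> b < n -> c < n -> d < n ->
  let r := refl_mod n k in cyclic4 (r a) (r b) (r c) (r d) = cyclic4 a d c b.
Proof.
move=> kn an bn cn dn /=; rewrite !(refl_mod_iter _ _ _ kn) // cyclic4_iter_succ_mod.
  exact: cyclic4_refl_mod0.
all: by rewrite /refl_mod; case: ifP; lia.
Qed.

(** * Colourings by residues *)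

Lemma modn_cases3 x n : x < 3 * n ->
  exists2 r, x %% n = r & r < n /\ (x = r \/ x = r + n \/ x = r + 2 * n).
Proof.
move=> x3n; exists (x %% n) => //; split; first by rewrite ltn_mod; lia.
case: (ltnP x n) => [xn|nx]; first by left; rewrite modn_small.
case: (ltnP x (2 * n)) => [x2n|nx2].
  by right; left; rewrite -{2}(subnK nx) modnDr modn_small; lia.
by right; right; rewrite -{2}(subnK nx2) (addnC (x - _)) modnMDl modn_small; lia.
Qed.

Definition north_res n r := (r == 0) || (n %/ 2 < r).

Definition res_colour n K x y := north_res n ((x + y + K) %% n).

Definition res_crossings n K := cyc_crossings n (res_colour n K).

Lemma res_colourC n K x y : res_colour n K x y = res_colour n K y x.
Proof. by rewrite /res_colour (addnC x). Qed.

Lemma res_crossings_add2 n K : res_crossings n (K + 2) = res_crossings n K.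
Proof.
rewrite /res_crossings /cyc_crossings -[in RHS](sum4_bij _ (bij_succ_mod n)).
apply: eq_sum4 => a b c d an bn cn dn; rewrite cyclic4_succ_mod //.
have shift x y : x < n -> y < n ->
    res_colour n K (succ_mod n x) (succ_mod n y) = res_colour n (K + 2) x y.
  move=> xn yn; rewrite /res_colour !succ_modE // -addnA modnDml addnCA modnDml.
  by congr (north_res n (_ %% n)); lia.
by rewrite !shift.
Qed.

Lemma res_crossings_addn n K : res_crossings n (K + n) = res_crossings n K.
Proof. by apply: eq_cyc_crossings => x y _ _; rewrite /res_colour addnA modnDr. Qed.

(* For even n, r |-> 1 - r (mod n) exchanges the two colour classes of north_res. *)
Lemma res_colour_refl m x y : x < 2 * m -> y < 2 * m ->
  let r := refl_mod (2 * m) 0 in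
  res_colour (2 * m) 2 (r x) (r y) = ~~ res_colour (2 * m) (2 * m).-1 x y.
Proof.
move=> xn yn /=; rewrite /res_colour /north_res (_ : 2 * m %/ 2 = m); last lia.
case: (@modn_cases3 (refl_mod (2 * m) 0 x + refl_mod (2 * m) 0 y + 2) (2 * m)).
  by rewrite /refl_mod; do ?case: ifP; lia.
move=> r -> hr; case: (@modn_cases3 (x + y + (2 * m).-1) (2 * m)); first lia.
by move=> r' -> hr'; move: hr; rewrite /refl_mod; do ?case: ifP; move=> *; apply/idP/idP; lia.
Qed.

Lemma res_crossings_refl m : 0 < m ->
  res_crossings (2 * m) 2 = res_crossings (2 * m) (2 * m).-1.
Proof.
move=> m0; have n0 : 0 < 2 * m by lia.
rewrite /res_crossings /cyc_crossings -(sum4_bij _ (bij_refl_mod _ _ n0)) -sum4_swap_bd.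
apply: eq_sum4 => a b c d an bn cn dn; rewrite cyclic4_refl_mod // !res_colour_refl //.
by rewrite (res_colourC _ _ d b); do 2 case: res_colour.
Qed.

Lemma res_crossings_const n K : 0 < n -> res_crossings n K = res_crossings n 2.
Proof.
move=> n0; have add2 j L : res_crossings n (L + 2 * j) = res_crossings n L.
  elim: j => [|j IHj]; first by rewrite muln0 addn0.
  by rewrite -[RHS]IHj -[RHS]res_crossings_add2; congr res_crossings; lia.
have even_const L : ~~ odd L -> res_crossings n L = res_crossings n 2.
  move=> evenL; rewrite -res_crossings_addn -[LHS]res_crossings_addn.
  by rewrite -[in RHS](add2 ((L + n + n - 2) %/ 2)); congr res_crossings; lia.
have [evenK|oddK] := boolP (~~ odd K); first exact: even_const.
have [oddn|evenn] := boolP (odd n).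
  by rewrite -res_crossings_addn even_const //; lia.
have [m nE] : exists m, n = 2 * m by exists n./2; lia.
rewrite nE res_crossings_refl -?nE; last lia.
by rewrite -res_crossings_addn -[RHS](add2 ((K + 1) %/ 2)); congr res_crossings; lia.
Qed.

Lemma cyclic4_refl_mod_chord n a b c d : a + c < n -> b < n -> d < n ->
  let r := refl_mod n (a + c) in cyclic4 a (r b) c (r d) = cyclic4 a b c d.
Proof.
move=> acn bn dn r; have [an cn] : a < n /\ c < n by lia.
have [rb _ rrb _] : [/\ r b < n, r b < n, r (r b) = b & r (r b) = b] := bij_refl_mod _ _ acn _ bn.
have [rd _ rrd _] : [/\ r d < n, r d < n, r (r d) = d & r (r d) = d] := bij_refl_mod _ _ acn _ dn.
have ra : r a = c by rewrite /r /refl_mod; case: ifP; lia.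
have rc : r c = a by rewrite /r /refl_mod; case: ifP; lia.
have := cyclic4_refl_mod _ _ c (r b) a (r d) acn cn rb an rd.
by rewrite /= -/r rc rrb ra rrd => ->; rewrite [RHS]cyclic4_rot [RHS]cyclic4_rot.
Qed.

Lemma Mn_north_even n x y : ~~ odd n -> x < n -> y < n ->
  Mn_north n (x + y + 2) = res_colour n 2 x y.
Proof.
move=> evenn xn yn; rewrite /Mn_north /res_colour /north_res (negbTE evenn).
by case: (@modn_cases3 (x + y + 2) n) => [|r -> [rn hr]]; lia.
Qed.

Section Odd.

Variable n : nat.
Hypothesis odd_n : odd n.

Definition middle_chord x y := x + y + 2 == n %/ 2 + 1.

Lemma Mn_north_odd x y : x < n -> y < n ->
  Mn_north n (x + y + 2) = ~~ middle_chord x y && res_colour n 2 x y.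
Proof.
move=> xn yn; rewrite /Mn_north /res_colour /north_res /middle_chord odd_n.
by case: (@modn_cases3 (x + y + 2) n) => [|r -> [rn hr]]; lia.
Qed.

Lemma res_colour_middle x y : middle_chord x y -> res_colour n 2 x y.
Proof. by rewrite /middle_chord /res_colour /north_res => /eqP mid; rewrite modn_small; lia. Qed.

Lemma cyclic4_middle a b c d : cyclic4 a b c d -> ~~ (middle_chord a c && middle_chord b d).
Proof. by rewrite /cyclic4 /middle_chord; lia. Qed.

Lemma res_colour_refl_middle a b c d : a < n -> b < n -> c < n -> d < n ->
  middle_chord a c -> cyclic4 a b c d ->
  let r := refl_mod n (a + c) in res_colour n 2 (r b) (r d) = ~~ res_colour n 2 b d.
Proof.
rewrite /middle_chord /res_colour /north_res /refl_mod => an bn cn dn /eqP mid abcd /=.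
case: (@modn_cases3 (b + d + 2) n) => [|r' -> [rn' hr']]; first lia.
move: abcd; rewrite /cyclic4 => abcd; case: ifP => bac; case: ifP => dac.
- case: (@modn_cases3 (a + c - b + (a + c - d) + 2) n) => [|r -> [rn hr]]; first lia.
  by apply/idP/idP; lia.
- case: (@modn_cases3 (a + c - b + (a + c + n - d) + 2) n) => [|r -> [rn hr]]; first lia.
  by apply/idP/idP; lia.
- case: (@modn_cases3 (a + c + n - b + (a + c - d) + 2) n) => [|r -> [rn hr]]; first lia.
  by apply/idP/idP; lia.
- case: (@modn_cases3 (a + c + n - b + (a + c + n - d) + 2) n) => [|r -> [rn hr]]; first lia.
  by apply/idP/idP; lia.
Qed.

(* The reflection v |-> a + c - v fixes the chord {a, c}, permutes the chords
   crossing it and, by res_colour_refl_middle, swaps their colours. *)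
Lemma crossings_through_middle_balanced a c : a < n -> c < n ->
  \sum_(0 <= b < n) \sum_(0 <= d < n)
    [&& cyclic4 a b c d, middle_chord a c & ~~ res_colour n 2 b d] =
  \sum_(0 <= b < n) \sum_(0 <= d < n)
    [&& cyclic4 a b c d, middle_chord a c & res_colour n 2 b d].
Proof.
move=> an cn; have [mid|_] := boolP (middle_chord a c); last first.
  by apply: eq_big_nat => b _; apply: eq_big_nat => d _; rewrite !andbF.
have acn : a + c < n by move: mid; rewrite /middle_chord; lia.
rewrite -[in LHS](sum_nat_bij _ (bij_refl_mod _ _ acn)); apply: eq_big_nat => b /andP[_ bn].
rewrite -[in LHS](sum_nat_bij _ (bij_refl_mod _ _ acn)); apply: eq_big_nat => d /andP[_ dn].
rewrite cyclic4_refl_mod_chord //; have [abcd|//] := boolP (cyclic4 a b c d).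
by rewrite res_colour_refl_middle ?negbK.
Qed.

Lemma cyc_crossings_Mn_odd :
  cyc_crossings n (fun x y => Mn_north n (x + y + 2)) = res_crossings n 2.
Proof.
pose M (f : bool -> bool) a b c d : nat :=
  [&& cyclic4 a b c d, middle_chord a c & f (res_colour n 2 b d)].
have balanced : sum4 n (M negb) = sum4 n (M id).
  apply: eq_big_nat => a /andP[_ an].
  rewrite exchange_big_nat [RHS]exchange_big_nat; apply: eq_big_nat => c /andP[_ cn].
  exact: crossings_through_middle_balanced.
have rotM f : sum4 n (fun a b c d => M f b c d a) = sum4 n (M f) by apply: sum4_rot.
have pointwise a b c d : a < n -> b < n -> c < n -> d < n ->
    (cyclic4 a b c d && (Mn_north n (a + c + 2) == Mn_north n (b + d + 2)) : nat)
      + M id a b c d + M id b c d a =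
    (cyclic4 a b c d && (res_colour n 2 a c == res_colour n 2 b d) : nat)
      + M negb a b c d + M negb b c d a.
  move=> an bn cn dn; rewrite /M (cyclic4_rot a b c d) (res_colourC _ _ c a) !Mn_north_odd //.
  have := @cyclic4_middle a b c d; have := @res_colour_middle a c.
  have := @res_colour_middle b d.
  case: (cyclic4 a b c d); case: (middle_chord a c); case: (middle_chord b d);
    case: (res_colour n 2 a c); case: (res_colour n 2 b d) => h1 h2 h3 //=;
    by [have := h1 isT | have := h2 isT | have := h3 isT].
move/eq_sum4: pointwise; rewrite !sum4D rotM rotM balanced /res_crossings /cyc_crossings.
lia.
Qed.

End Odd.

(** * Averaging over the twist *)

Lemma sum_nat_in_range n l h : \sum_(0 <= t < n) (l <= t < h : nat) = minn h n - l.
Proof.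
elim: n => [|n IHn]; first by rewrite big_geq //; lia.
by rewrite big_nat_recr //= IHn; lia.
Qed.

Definition agree_count n x y :=
  \sum_(0 <= t < n) (north_res n ((x + t) %% n) == north_res n ((y + t) %% n) : nat).

Lemma agree_count_mod n x y : agree_count n (x %% n) (y %% n) = agree_count n x y.
Proof. by apply: eq_big_nat => t _; rewrite !modnDml. Qed.

Lemma agree_count_shift n x y k : agree_count n (x + k) (y + k) = agree_count n x y.
Proof.
elim: k => [|k IHk]; first by rewrite !addn0.
rewrite -IHk /agree_count -[in RHS](sum_nat_bij _ (bij_succ_mod n)).
by apply: eq_big_nat => t /andP[_ tn]; rewrite succ_modE // !modnDmr !addnS.
Qed.

(* n - 2 * d + (2 * d - n) is |n - 2d| in truncated subtraction. *)
Lemma agree_count0 n d : 0 < d < n -> agree_count n 0 d = n - 2 * d + (2 * d - n).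
Proof.
move=> dn; pose agree t : nat := north_res n ((0 + t) %% n) == north_res n ((d + t) %% n).
have complement (P : nat -> nat) : (forall t, t < n -> agree t + P t = 1) ->
    agree_count n 0 d + \sum_(0 <= t < n) P t = n.
  move=> agreeP; rewrite -big_split (eq_big_nat _ _ (F2 := fun=> 1)).
    by rewrite sum_nat_const_nat; lia.
  by move=> t /andP[_ tn]; apply: agreeP.
have agreeE t : t < n -> agree t = (north_res n t == north_res n ((d + t) %% n)).
  by move=> tn; rewrite /agree add0n modn_small.
case: (leqP d (n %/ 2)) => dm.
- suff /complement : forall t, t < n -> agree t +
      ((n %/ 2 + 1 - d <= t < n %/ 2 + 1) + (0 <= t < 1) + (n + 1 - d <= t < n)) = 1.
    by rewrite !big_split !sum_nat_in_range /=; lia.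
  move=> t tn; rewrite agreeE // /north_res.
  by case: (@modn_cases3 (d + t) n) => [|r -> [rn hr]]; lia.
- suff /complement : forall t, t < n -> agree t +
      ((1 <= t < n - d + 1) + (n %/ 2 + 1 <= t < n %/ 2 + 1 + (n - d))) = 1.
    by rewrite !big_split !sum_nat_in_range /=; lia.
  move=> t tn; rewrite agreeE // /north_res.
  by case: (@modn_cases3 (d + t) n) => [|r -> [rn hr]]; lia.
Qed.

Lemma sum_res_crossings n : \sum_(0 <= K < n) res_crossings n K =
  sum4 n (fun a b c d => cyclic4 a b c d * agree_count n (a + c) (b + d)).
Proof.
rewrite /res_crossings /cyc_crossings sum_sum4; apply: eq_sum4 => a b c d _ _ _ _.
rewrite /agree_count big_distrr; apply: eq_big_nat => K _.
by rewrite /res_colour /=; case: cyclic4; rewrite ?mul1n.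
Qed.

Lemma agree_count_succ_mod n x y z w : x < n -> y < n -> z < n -> w < n ->
  let s := succ_mod n in
  agree_count n (s x + s y) (s z + s w) = agree_count n (x + y) (z + w).
Proof.
move=> xn yn zn wn /=; rewrite !succ_modE // -agree_count_mod !modnDm agree_count_mod.
by rewrite -[RHS](agree_count_shift _ _ _ 2); congr agree_count; lia.
Qed.

Definition weighted_crossings_at n a :=
  \sum_(0 <= b < n) \sum_(0 <= c < n) \sum_(0 <= d < n)
    cyclic4 a b c d * agree_count n (a + c) (b + d).

Lemma weighted_crossings_at_succ n a : a < n ->
  weighted_crossings_at n (succ_mod n a) = weighted_crossings_at n a.
Proof.
move=> an; rewrite /weighted_crossings_at -[in LHS](sum_nat_bij _ (bij_succ_mod n)).
apply: eq_big_nat => b /andP[_ bn]; rewrite -[in LHS](sum_nat_bij _ (bij_succ_mod n)).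
apply: eq_big_nat => c /andP[_ cn]; rewrite -[in LHS](sum_nat_bij _ (bij_succ_mod n)).
by apply: eq_big_nat => d /andP[_ dn]; rewrite cyclic4_succ_mod // agree_count_succ_mod.
Qed.

Lemma weighted_crossings_at_const n a : a < n ->
  weighted_crossings_at n a = weighted_crossings_at n 0.
Proof.
elim: a => // a IHa an; rewrite -IHa 1?ltnW // -[RHS]weighted_crossings_at_succ 1?ltnW //.
by rewrite /succ_mod an.
Qed.

Lemma sum4_weighted n :
  sum4 n (fun a b c d => cyclic4 a b c d * agree_count n (a + c) (b + d)) =
  n * weighted_crossings_at n 0.
Proof.
rewrite -[n in n * _]subn0 -sum_nat_const_nat.
by apply: eq_big_nat => a /andP[_ an]; apply: weighted_crossings_at_const.
Qed.

Lemma cyclic4_at0 b c d : cyclic4 0 b c d = [&& 0 < b < c & c < d].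
Proof. by rewrite /cyclic4; apply/idP/idP; lia. Qed.

Lemma weighted_crossings_at0 n : weighted_crossings_at n 0 =
  \sum_(0 <= b < n) \sum_(0 <= c < n) \sum_(0 <= d < n)
    [&& 0 < b < c & c < d] * (n - 2 * (b + d - c) + (2 * (b + d - c) - n)).
Proof.
apply: eq_big_nat => b _; apply: eq_big_nat => c _; apply: eq_big_nat => d /andP[_ dn].
rewrite cyclic4_at0; have [bcd|_] := boolP [&& 0 < b < c & c < d]; rewrite ?mul0n // !mul1n.
by rewrite -{1}(subnK (_ : c <= b + d)) ?agree_count_shift ?agree_count0; lia.
Qed.

(** * The closed form *)

Lemma sum_triples_recr n (F : nat -> nat -> nat -> nat) :
  (forall b c d, F b c d != 0 -> b < c < d) ->
  \sum_(0 <= b < n.+1) \sum_(0 <= c < n.+1) \sum_(0 <= d < n.+1) F b c d =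
  \sum_(0 <= b < n) \sum_(0 <= c < n) \sum_(0 <= d < n) F b c d +
  \sum_(0 <= b < n) \sum_(0 <= c < n) F b c n.
Proof.
move=> Fsupp; have F0 b c d : ~~ (b < c < d) -> F b c d = 0.
  by move=> bcd; apply/eqP; apply: contraNT bcd; apply: Fsupp.
rewrite big_nat_recr //= [X in _ + X]big1_seq ?addn0; last first.
  move=> c /andP[_]; rewrite mem_index_iota => /andP[_ cn].
  by apply: big1_seq => d /andP[_]; rewrite mem_index_iota => /andP[_ dn]; apply: F0; lia.
rewrite -big_split; apply: eq_big_nat => b /andP[_ bn].
rewrite big_nat_recr //= [X in _ + X]big1_seq ?addn0; last first.
  by move=> d /andP[_]; rewrite mem_index_iota => /andP[_ dn]; apply: F0; lia.
by rewrite -big_split; apply: eq_big_nat => c _; rewrite big_nat_recr.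
Qed.

Lemma sum_pairs_gap n (h : nat -> nat) :
  \sum_(0 <= b < n) \sum_(0 <= c < n) (0 < b < c) * h (b + n - c) =
  \sum_(0 <= k < n) (k - 1) * h k.
Proof.
elim: n h => [|n IHn] h; first by rewrite !big_geq.
rewrite big_nat_recr //= [X in _ + X]big1_seq ?addn0; last first.
  move=> c /andP[_]; rewrite mem_index_iota => /andP[_ cn].
  by rewrite (_ : (0 < n < c) = false) //; lia.
under eq_big_nat => b /andP[_ bn] do rewrite big_nat_recr //=.
rewrite big_split /= (eq_big_nat _ _ (F2 := fun b =>
  \sum_(0 <= c < n) (0 < b < c) * (h \o succn) (b + n - c))); last first.
  by move=> b /andP[_ bn]; apply: eq_big_nat => c /andP[_ cn] /=; congr (_ * h _); lia.
rewrite IHn big_nat_recl //= sub0n mul0n add0n -big_split /=.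
apply: eq_big_nat => k /andP[_ kn]; rewrite (_ : k + n.+1 - n = k.+1); last lia.
by rewrite -mulnDl; congr (_ * _); lia.
Qed.

Lemma sum_crossing_triples n (h : nat -> nat) :
  \sum_(0 <= b < n) \sum_(0 <= c < n) \sum_(0 <= d < n) [&& 0 < b < c & c < d] * h (b + d - c) =
  \sum_(0 <= k < n) (k - 1) * (n - 1 - k) * h k.
Proof.
elim: n => [|n IHn]; first by rewrite !big_geq.
rewrite sum_triples_recr => [|b c d]; last first.
  by case: (boolP [&& 0 < b < c & c < d]) => bcd; rewrite ?mul0n ?eqxx //; lia.
rewrite IHn [X in _ + X = _](eq_big_nat _ _ (F2 := fun b =>
  \sum_(0 <= c < n) (0 < b < c) * h (b + n - c))); last first.
  by move=> b /andP[_ bn]; apply: eq_big_nat => c /andP[_ cn]; congr (_ * _); lia.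
rewrite sum_pairs_gap big_nat_recr //= (_ : n.+1 - 1 - n = 0) ?muln0 ?mul0n ?addn0; last lia.
rewrite -big_split; apply: eq_big_nat => k /andP[_ kn] /=.
by rewrite -mulnDl -{2}[k - 1]muln1 -mulnDr; congr (_ * _ * _); lia.
Qed.

Definition cubic_term N j := j * (N - j) * (N - 2 * j).

Lemma sum_cubic_term N J : 2 * J <= N + 2 ->
  2 * \sum_(0 <= j < J) cubic_term N j = J * (J - 1) * (N - J) * (N - J + 1).
Proof.
elim: J => [|J IHJ] JN; first by rewrite big_geq.
rewrite big_nat_recr //= mulnDr IHJ; last lia.
case: J {IHJ} JN => [|J] JN; first by rewrite /cubic_term !mul0n.
have [r ->] : exists r, N = 2 * J.+1 + r by exists (N - 2 * J.+1); lia.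
rewrite /cubic_term.
have -> : J.+2 - 1 = J.+1 by lia.
have -> : J.+1 - 1 = J by lia.
have -> : 2 * J.+1 + r - J.+2 = J + r by lia.
have -> : 2 * J.+1 + r - J.+1 = J.+1 + r by lia.
by rewrite (_ : 2 * J.+1 + r - 2 * J.+1 = r); [ring | lia].
Qed.

(* The summand is invariant under k |-> n - k, and with j = k - 1 it is cubic_term (n - 2) j. *)
Lemma sum_crossing_weights_split n : 2 <= n ->
  \sum_(0 <= k < n) (k - 1) * (n - 1 - k) * (n - 2 * k + (2 * k - n)) =
  \sum_(0 <= j < n %/ 2) cubic_term (n - 2) j +
  \sum_(0 <= j < n - n %/ 2 - 1) cubic_term (n - 2) j.
Proof.
move=> n2; rewrite (@big_cat_nat _ _ _ (n %/ 2 + 1)) //=; last lia.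
congr (_ + _).
  rewrite addn1 big_nat_recl // sub0n !mul0n add0n.
  apply: eq_big_nat => j /andP[_ jn]; rewrite /cubic_term.
  by congr (_ * _ * _); lia.
rewrite -{1}[n %/ 2 + 1]add0n big_addn big_nat_rev /= subnDA.
apply: eq_big_nat => j /andP[_ jn]; rewrite /cubic_term [j * _]mulnC.
by congr (_ * _ * _); lia.
Qed.

Lemma sum_crossing_weights n : 0 < n ->
  \sum_(0 <= k < n) (k - 1) * (n - 1 - k) * (n - 2 * k + (2 * k - n)) = fourZ n.
Proof.
case: (ltnP n 2) => [n1 n0|n2 _]; first by rewrite (_ : n = 1); [rewrite big_nat1 | lia].
rewrite sum_crossing_weights_split // /fourZ.
have [m [-> | ->]] : exists m, n = 2 * m.+1 \/ n = 2 * m.+1 + 1 by exists (n %/ 2).-1; lia.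
- have -> : 2 * m.+1 %/ 2 = m.+1 by lia.
  have -> : 2 * m.+1 - m.+1 - 1 = m by lia.
  rewrite big_nat_recr //= {2}/cubic_term (_ : 2 * m.+1 - 2 - 2 * m = 0) ?muln0 ?addn0; last lia.
  rewrite addnn -mul2n sum_cubic_term; last lia.
  have -> : (2 * m.+1 - 1) %/ 2 = m by lia.
  have -> : (2 * m.+1 - 2) %/ 2 = m by lia.
  have -> : (2 * m.+1 - 3) %/ 2 = m - 1 by lia.
  have -> : 2 * m.+1 - 2 - m = m by lia.
  ring.
- have -> : (2 * m.+1 + 1) %/ 2 = m.+1 by lia.
  have -> : 2 * m.+1 + 1 - m.+1 - 1 = m.+1 by lia.
  rewrite addnn -mul2n sum_cubic_term; last lia.
  have -> : (2 * m.+1 + 1 - 1) %/ 2 = m.+1 by lia.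
  have -> : (2 * m.+1 + 1 - 2) %/ 2 = m by lia.
  have -> : (2 * m.+1 + 1 - 3) %/ 2 = m by lia.
  have -> : 2 * m.+1 + 1 - 2 - m.+1 = m by lia.
  have -> : m.+1 - 1 = m by lia.
  ring.
Qed.

Lemma res_crossings_value n : 0 < n -> res_crossings n 2 = fourZ n.
Proof.
move=> n0; have avg : \sum_(0 <= K < n) res_crossings n K = n * res_crossings n 2.
  by rewrite (eq_big_nat _ _ (fun K _ => res_crossings_const n K n0)) sum_nat_const_nat subn0.
move: avg; rewrite sum_res_crossings sum4_weighted weighted_crossings_at0.
rewrite (sum_crossing_triples n (fun k => n - 2 * k + (2 * k - n))) sum_crossing_weights //.
by move/eqP; rewrite eqn_pmul2l // => /eqP.
Qed.

Theorem lemma2p3 (n : nat) (hemi : nat -> nat -> hemisphere) :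
  0 < n ->
  (forall i j, 1 <= i <= n -> 1 <= j <= n -> MDH n hemi i j = Mn n i j) ->
  4 * eps n hemi = fourZ n.
Proof.
move=> n0 MDH_Mn; rewrite eps_crossings // -cyc_crossingsE; last first.
  by move=> x y; rewrite (addnC x).
rewrite -res_crossings_value //; have [oddn|evenn] := boolP (odd n).
  exact: cyc_crossings_Mn_odd.
by apply: eq_cyc_crossings => x y xn yn; apply: Mn_north_even.
Qed.
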